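(* Let $\mathcal{T}$ be a conforming simplicial mesh of a domain in $\mathbb{R}^d$ with nodes $\{\mathbf{x}_i\}$, let $F$ be a common facet of two cells $T_o$ and $T_n$, and let $\mathbf{x}^* \in F$. For a point $\mathbf{x}$ in the closure of a cell $T$, let $\mathcal{N}^1(\mathbf{x})$ be the set of 1-ring neighbours of $T$, and let $\mathcal{N}^1_o$, $\mathcal{N}^1_n$ denote these sets for $T_o$, $T_n$; put $\mathcal{N}^1_c=\mathcal{N}^1_o\cap\mathcal{N}^1_n$, $\mathcal{N}^1_r=\mathcal{N}^1_o\setminus\mathcal{N}^1_c$ (removed nodes), $\mathcal{N}^1_a=\mathcal{N}^1_n\setminus\mathcal{N}^1_c$ (added nodes). Let $d:\mathbb{R}^d\to[0,\infty)$ be a smooth compactly supported sample-weighting function and, for each node $i$, let $\eta_i$ be a diminishing function, so that the modified sample weight of node $i\in\mathcal{N}^1(\mathbf{x})$ at $\mathbf{x}$ is $d'_i(\mathbf{x})=\eta_i(\mathbf{x})\,d(\mathbf{x}_i-\mathbf{x})$. With $\mathbf{p}(\mathbf{y})=[1,\mathbf{y}^T]^T$ and fixed nodal values $u_i\in\mathbb{R}$, define $$\mathbf{M}(\mathbf{x})=\sum_{i\in\mathcal{N}^1(\mathbf{x})} d'_i(\mathbf{x})\,\mathbf{p}(\mathbf{x}_i-\mathbf{x})\mathbf{p}(\mathbf{x}_i-\mathbf{x})^T,\qquad \mathbf{b}(\mathbf{x})=\sum_{i\in\mathcal{N}^1(\mathbf{x})} d'_i(\mathbf{x})\,u_i\,\mathbf{p}(\mathbf{x}_i-\mathbf{x}),$$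 and the MLS reconstruction of the value and gradient $\begin{bmatrix}\hat u(\mathbf{x})\\ \nabla\hat u(\mathbf{x})\end{bmatrix}=\mathbf{M}(\mathbf{x})^{-1}\mathbf{b}(\mathbf{x})$. Assume: (i) for every $i\in\mathcal{N}^1_c$, $\mathbf{x}\mapsto \eta_i(\mathbf{x})d(\mathbf{x}_i-\mathbf{x})$ is smooth (in particular continuous) on a neighbourhood of $\mathbf{x}^*$ in $T_o\cup T_n$; (ii) $\eta$ is locally diminishing: there is $K>0$ such that $|\eta_i(\mathbf{x})|\le K\,\|\mathbf{x}-\mathbf{x}^*\|$ for $i\in\mathcal{N}^1_r$, $\mathbf{x}\in T_o$ and for $i\in\mathcal{N}^1_a$, $\mathbf{x}\in T_n$, near $\mathbf{x}^*$; (iii) the nodes are non-degenerate near $\mathbf{x}^*$, i.e. the minimum singular value of $\mathbf{M}(\mathbf{x})$ is bounded away from $0$ for $\mathbf{x}\in T_o\cup T_n$ near $\mathbf{x}^*$. Then both the reconstructed value $\hat u$ and the reconstructed gradient $\nabla\hat u$ are continuous across $F$ at $\mathbf{x}^*$: if $\mathbf{x}^o\in T_o$ and $\mathbf{x}^n\in T_n$ with $\|\mathbf{x}^n-\mathbf{x}^o\|=\mathcal{O}(\epsilon)$ near $\mathbf{x}^*$, then the difference of $[\hat u,\nabla\hat u^T]^T$ at $\mathbf{x}^n$ (computed with $\mathcal{N}^1_n$) and at $\mathbf{x}^o$ (computed with $\mathcal{N}^1_o$) is $\mathcal{O}(\epsilon)$. In particular, the MLS kernel values and kernel gradients (the rows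 of $\mathbf{M}^{-1}$ times the weighted basis, i.e. the case of unit nodal values $u_i=\delta_{ij}$) are continuous across cell boundaries.
   Context: The 0-ring neighbours $\mathcal{N}^0$ of a cell are its vertices; the 1-ring neighbours $\mathcal{N}^1$ of a cell are all mesh nodes that are vertices of the cell or are joined by a mesh edge to a vertex of the cell (so $\mathcal{N}^0\subset\mathcal{N}^1$). When a point moves from $T_o$ into $T_n$ through $F$, the active node set changes from $\mathcal{N}^1_o$ to $\mathcal{N}^1_n$. This is the moving-least-squares (MLS) reconstruction with complete linear polynomial basis used in the Unstructured MLS Material Point Method, with sample weights multiplied by a diminishing function $\eta$. *)

From HB Require Import structures.
From mathcomp Require Import all_boot all_order all_algebra.
From mathcomp Require Import all_classical all_reals all_analysis.
Set Implicit Arguments. Unset Strict Implicit. Unset Printing Implicit Defensive.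
Import Order.TTheory GRing.Theory Num.Theory.
Import numFieldNormedType.Exports.
Local Open Scope classical_set_scope.
Local Open Scope ring_scope.

Section Defs.
Variables (R : realType) (d N : nat).
Implicit Types (xs : 'I_N -> 'rV[R]_d) (cells : {set {set 'I_N}}) (S : {set 'I_N}).

Definition enormr (x : 'rV[R]_d) : R := Num.sqrt (\sum_j x 0 j ^+ 2).
Definition enormc n (v : 'cV[R]_n) : R := Num.sqrt (\sum_i v i 0 ^+ 2).

(** Geometry of the simplicial mesh. A cell is given by its set of vertex
    indices; the (open) cell is the interior of the convex hull. *)
Definition aff_indep xs S : Prop :=
  forall lam : 'I_N -> R,
    \sum_(i in S) lam i = 0 -> \sum_(i in S) lam i *: xs i = 0 ->
    forall i, i \in S -> lam i = 0.

Definition is_simplex xs S : Prop := #|S| = d.+1 /\ aff_indep xs S.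

Definition open_cell xs S : set 'rV[R]_d :=
  [set x | exists lam : 'I_N -> R, (forall i, i \in S -> 0 < lam i) /\
     \sum_(i in S) lam i = 1 /\ x = \sum_(i in S) lam i *: xs i].

Definition closed_cell xs S : set 'rV[R]_d :=
  [set x | exists lam : 'I_N -> R, (forall i, i \in S -> 0 <= lam i) /\
     \sum_(i in S) lam i = 1 /\ x = \sum_(i in S) lam i *: xs i].

(** conforming simplicial mesh: every cell is a nondegenerate d-simplex,
    every node is a vertex of some cell, and two closed cells meet exactly
    in the closed common face (empty if no common vertex). *)
Definition conforming_mesh xs cells : Prop :=
  (forall S, S \in cells -> is_simplex xs S) /\
  (forall i : 'I_N, exists2 S, S \in cells & i \in S) /\
  (forall S S', S \in cells -> S' \in cells ->
     closed_cell xs S `&` closed_cell xs S' = closed_cell xs (S :&: S')).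

(** F (vertex set So :&: Sn) is a common facet of the cells So and Sn *)
Definition common_facet cells So Sn : Prop :=
  [/\ So \in cells, Sn \in cells, So != Sn & #|So :&: Sn| = d].

Definition mesh_edge cells (i j : 'I_N) : bool :=
  (i != j) && [exists S in cells, (i \in S) && (j \in S)].

Definition ring1 cells S : {set 'I_N} :=
  [set j | [exists i in S, (j == i) || mesh_edge cells i j]].

Fixpoint Ck (k : nat) (f : 'rV[R]_d -> R) : Prop :=
  if k is k'.+1 then
    (forall x v : 'rV[R]_d, derivable f x v) /\
    (forall v : 'rV[R]_d, Ck k' (fun x => derive f x v))
  else continuous f.
Definition smooth (f : 'rV[R]_d -> R) : Prop := forall k, Ck k f.

Definition weight_function (dw : 'rV[R]_d -> R) : Prop :=
  [/\ smooth dw, (forall y, 0 <= dw y) & compact (closure [set y | dw y != 0])].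

Definition pvec (y : 'rV[R]_d) : 'cV[R]_(1 + d) := col_mx 1 y^T.

Definition mod_weight xs (dw : 'rV[R]_d -> R) (eta : 'I_N -> 'rV[R]_d -> R)
  (i : 'I_N) (x : 'rV[R]_d) : R := eta i x * dw (xs i - x).

Definition MLS_M xs dw eta (Ns : {set 'I_N}) (x : 'rV[R]_d) : 'M[R]_(1 + d) :=
  \sum_(i in Ns) mod_weight xs dw eta i x *: (pvec (xs i - x) *m (pvec (xs i - x))^T).

Definition MLS_b xs dw eta (u : 'I_N -> R) (Ns : {set 'I_N}) (x : 'rV[R]_d)
  : 'cV[R]_(1 + d) :=
  \sum_(i in Ns) (mod_weight xs dw eta i x * u i) *: pvec (xs i - x).

(** [u_hat(x); grad u_hat(x)] = M(x)^{-1} b(x) *)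
Definition MLS_recon xs dw eta u Ns x : 'cV[R]_(1 + d) :=
  invmx (MLS_M xs dw eta Ns x) *m MLS_b xs dw eta u Ns x.

End Defs.

Definition sigma_min (R : realType) n (M : 'M[R]_n) : R :=
  inf [set enormc (M *m v) | v in [set v : 'cV[R]_n | enormc v = 1]].
Arguments common_facet d {N} cells So Sn.

From HB Require Import structures.
From mathcomp Require Import all_boot all_order all_algebra.
From mathcomp Require Import all_classical all_reals all_analysis.
From mathcomp Require Import ring lra.
Set Implicit Arguments. Unset Strict Implicit. Unset Printing Implicit Defensive.
Import Order.TTheory GRing.Theory Num.Theory.
Import numFieldNormedType.Exports.
Local Open Scope classical_set_scope.
Local Open Scope ring_scope.

(* Near x*, every entry of M and b computed on either side of the facet is within
   O(|x - x*|) of one common limit: the common nodes contribute terms built from smooth,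
   hence Lipschitz, functions, while the removed and the added nodes carry weights that
   vanish linearly at x*.  The identity A^-1 b - B^-1 b' = A^-1 (b - b' + (B - A) B^-1 b'),
   together with |A^-1 y| <= |y| / c from the lower bound c on the smallest singular
   values, turns these entrywise O(eps) bounds into an O(eps) bound on the jump of M^-1 b. *)

Section EuclideanNorm.
Variable R : realType.

Lemma sum_sqr_le_sqr_sum (I : finType) (f : I -> R) :
  (forall i, 0 <= f i) -> \sum_i f i ^+ 2 <= (\sum_i f i) ^+ 2.
Proof.
move=> f0; rewrite expr2 big_distrl /=; apply: ler_sum => i _.
by rewrite expr2 ler_wpM2l // (bigD1 i) //= lerDl sumr_ge0.
Qed.

Lemma enormc_ge0 n (v : 'cV[R]_n) : 0 <= enormc v.
Proof. exact: sqrtr_ge0. Qed.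

Lemma enormr_ge0 d (v : 'rV[R]_d) : 0 <= enormr v.
Proof. exact: sqrtr_ge0. Qed.

Lemma enormr_tr d (v : 'rV[R]_d) : enormr v = enormc v^T.
Proof. by congr Num.sqrt; apply: eq_bigr => j _; rewrite mxE. Qed.

Lemma enormc_le n (v w : 'cV[R]_n) :
  (forall i, `|v i 0| <= `|w i 0|) -> enormc v <= enormc w.
Proof.
move=> vw; rewrite ler_sqrt ?sumr_ge0 // => [|i _]; last exact: sqr_ge0.
apply: ler_sum => i _; rewrite -(real_normK (num_real (v i 0))).
by rewrite -(real_normK (num_real (w i 0))) lerXn2r ?nnegrE.
Qed.

Lemma enormr_le d (v w : 'rV[R]_d) :
  (forall j, `|v 0 j| <= `|w 0 j|) -> enormr v <= enormr w.
Proof. by move=> vw; rewrite !enormr_tr; apply: enormc_le => j; rewrite !mxE. Qed.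

Lemma normr_coord_le_enormc n (v : 'cV[R]_n) i : `|v i 0| <= enormc v.
Proof.
rewrite -sqrtr_sqr ler_sqrt ?sumr_ge0 // => [|j _]; last exact: sqr_ge0.
by rewrite (bigD1 i) //= lerDl sumr_ge0 // => j _; exact: sqr_ge0.
Qed.

Lemma normr_coord_le_enormr d (v : 'rV[R]_d) j : `|v 0 j| <= enormr v.
Proof. by rewrite enormr_tr; have := normr_coord_le_enormc v^T j; rewrite mxE. Qed.

Lemma enormc_le_sum n (v : 'cV[R]_n) : enormc v <= \sum_i `|v i 0|.
Proof.
rewrite -[X in _ <= X]ger0_norm ?sumr_ge0 // -sqrtr_sqr ler_sqrt ?sqr_ge0 //.
apply: le_trans (sum_sqr_le_sqr_sum _) => //.
by apply: ler_sum => i _; rewrite real_normK // num_real.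
Qed.

Lemma enormr_le_sum d (v : 'rV[R]_d) : enormr v <= \sum_j `|v 0 j|.
Proof.
by rewrite enormr_tr; apply: le_trans (enormc_le_sum _) _; under eq_bigr do rewrite mxE.
Qed.

Lemma enormcZ n (a : R) (v : 'cV[R]_n) : enormc (a *: v) = `|a| * enormc v.
Proof.
rewrite /enormc -sqrtr_sqr -sqrtrM ?sqr_ge0 // big_distrr.
by congr Num.sqrt; apply: eq_bigr => i _; rewrite mxE exprMn.
Qed.

Lemma enormc_eq0 n (v : 'cV[R]_n) : (enormc v == 0) = (v == 0).
Proof.
apply/eqP/eqP => [v0|->]; last first.
  by rewrite /enormc big1 ?sqrtr0 // => i _; rewrite mxE expr0n.
apply/matrixP => i j; rewrite ord1 mxE.
by apply/normr0_eq0/eqP; rewrite eq_le normr_ge0 -v0 normr_coord_le_enormc.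
Qed.

Lemma enormc0 n : enormc (0 : 'cV[R]_n) = 0.
Proof. by apply/eqP; rewrite enormc_eq0. Qed.

End EuclideanNorm.

Section SmallestSingularValue.
Variables (R : realType) (n : nat) (M : 'M[R]_n) (c : R).
Hypothesis c_gt0 : 0 < c.
Hypothesis c_le_sigma : c <= sigma_min M.

Lemma sigma_min_mulmx w : c * enormc w <= enormc (M *m w).
Proof.
have [->|w0] := eqVneq w 0; first by rewrite mulmx0 enormc0 mulr0.
have w_gt0 : 0 < enormc w by rewrite lt_def enormc_eq0 w0 enormc_ge0.
pose v := (enormc w)^-1 *: w.
have v1 : enormc v = 1.
  by rewrite enormcZ ger0_norm ?invr_ge0 ?enormc_ge0 // mulVf // gt_eqF.
have : sigma_min M <= enormc (M *m v).
  apply: ge_inf; last by exists v.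
  by exists 0 => _ [y _ <-]; exact: enormc_ge0.
rewrite /v -scalemxAr enormcZ ger0_norm ?invr_ge0 ?enormc_ge0 // => sigma_le.
by rewrite -ler_pdivlMr // mulrC; apply: le_trans c_le_sigma sigma_le.
Qed.

Lemma sigma_min_unitmx : M \in unitmx.
Proof.
rewrite unitmxE unitfE; apply/negP => /eqP detM0.
have /det0P [v v0 vM] : \det M^T == 0 by rewrite det_tr detM0.
have Mv : M *m v^T = 0 by rewrite -[M]trmxK -trmx_mul vM trmx0.
have := sigma_min_mulmx v^T; rewrite Mv enormc0 pmulr_rle0 // => v_le0.
have /eqP : enormc v^T = 0 by apply/eqP; rewrite eq_le v_le0 enormc_ge0.
by rewrite enormc_eq0 -trmx0 (inj_eq trmx_inj) (negbTE v0).
Qed.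

Lemma enormc_invmx_mul y : enormc (invmx M *m y) <= enormc y / c.
Proof.
rewrite ler_pdivlMr // mulrC.
by have := sigma_min_mulmx (invmx M *m y); rewrite mulmxA mulmxV ?mul1mx ?sigma_min_unitmx.
Qed.

End SmallestSingularValue.

Section Neighbourhoods.
Variables (R : realType) (d : nat).

Lemma nbhs_enormrP (a : 'rV[R]_d) (P : 'rV[R]_d -> Prop) :
  (\forall x \near a, P x) <-> exists2 e : R, 0 < e & forall x, enormr (x - a) < e -> P x.
Proof.
split.
  move/nbhs_ballP => [e e0 aeP]; exists e => // x xe; apply: aeP; split => // i j.
  rewrite ord1 /ball /= distrC; apply: le_lt_trans xe.
  by have := normr_coord_le_enormr (x - a) j; rewrite !mxE.
move=> [e e0 eP]; apply/nbhs_ballP; exists (e / d.+1%:R) => [|x [_ ax]].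
  by rewrite /= divr_gt0.
apply: eP; apply: le_lt_trans (enormr_le_sum _) _.
apply: (@le_lt_trans _ _ (\sum_(j < d) (e / d.+1%:R))).
  by apply: ler_sum => j _; have := ax 0 j; rewrite /ball /= distrC !mxE => /ltW.
rewrite sumr_const card_ord -[_ *+ d]mulr_natr mulrAC ltr_pdivrMr ?ltr0n //.
by rewrite ltr_pM2l // ltr_nat.
Qed.

Lemma near_enormr_lt (a : 'rV[R]_d) e : 0 < e -> \forall x \near a, enormr (x - a) < e.
Proof. by move=> e0; apply/nbhs_enormrP; exists e. Qed.

End Neighbourhoods.

Section LineIncrement.
Variables (R : realType) (d : nat) (f : 'rV[R]_d -> R) (z e : 'rV[R]_d).

Lemma is_derive_along s : derivable f (z + s *: e) e ->
  is_derive s 1 (fun t : R => f (z + t *: e)) (derive f (z + s *: e) e).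
Proof.
move=> fe.
have E : (fun h : R => h^-1 *: (((fun t => f (z + t *: e)) \o shift s) (h *: 1)
                                   - f (z + s *: e)))
       = (fun h : R => h^-1 *: ((f \o shift (z + s *: e)) (h *: e) - f (z + s *: e))).
  apply/funext => h /=; rewrite /shift.
  by rewrite -[h *: 1]/(h * 1) mulr1 scalerDl addrCA addrA.
split; first by move: fe; rewrite /derivable E.
by rewrite /derive E.
Qed.

Lemma increment_along_le t B : (forall s, derivable f (z + s *: e) e) ->
  (forall s, `|s| <= `|t| -> `|derive f (z + s *: e) e| <= B) ->
  `|f (z + t *: e) - f z| <= B * `|t|.
Proof.
move=> fe fB; pose h s := f (z + s *: e).
have hD s := is_derive_along (fe s).
have hC : continuous h.
  by move=> s; apply: differentiable_continuous; apply/derivable1_diffP; case: (hD s).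
have -> : f z = h 0 by rewrite /h scale0r addr0.
case: (leP 0 t) => [t_ge0|t_lt0].
  have [c] := MVT_segment t_ge0 (fun c _ => hD c) (continuous_subspaceT hC).
  rewrite in_itv /= subr0 => /andP[c_ge0 c_le] ->.
  by rewrite normrM ler_wpM2r // fB // !ger0_norm // (le_trans c_ge0).
have [c] := MVT_segment (ltW t_lt0) (fun c _ => hD c) (continuous_subspaceT hC).
rewrite in_itv /= sub0r => /andP[c_ge c_le0] E.
rewrite distrC E normrM normrN ler_wpM2r // fB // !ler0_norm ?lerN2 //.
exact: ltW.
Qed.

End LineIncrement.

Section LipschitzAt.
Variables (R : realType) (d : nat) (a : 'rV[R]_d) (D : set 'rV[R]_d).
Local Notation V := 'rV[R]_d.

Definition lip_at (f : V -> R) (l : R) :=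
  exists C, \forall x \near a, D x -> `|f x - l| <= C * enormr (x - a).

Lemma bounded_near_continuous (g : V -> R) :
  {for a, continuous g} -> exists B, \forall x \near a, `|g x| <= B.
Proof.
move=> /cvgr_dist_lt /(_ _ ltr01) ga; exists (`|g a| + 1); apply: filterS ga => x gax.
have := ler_distD (g a) 0 (g x); rewrite !sub0r !normrN => gx.
by apply: le_trans gx _; rewrite lerD2l ltW.
Qed.

Lemma lip_at_bounded f l : lip_at f l -> exists B, \forall x \near a, D x -> `|f x| <= B.
Proof.
case=> C fC; exists (`|l| + `|C|).
move: fC (near_enormr_lt a ltr01); apply: filterS2 => x fx x1 Dx.
have -> : f x = (f x - l) + l by rewrite subrK.
apply: le_trans (ler_normD _ _) _; rewrite addrC lerD2l.
apply: le_trans (fx Dx) _; apply: le_trans (ler_norm _) _.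
by rewrite normrM (ger0_norm (enormr_ge0 _)); exact: ler_piMr (normr_ge0 C) (ltW x1).
Qed.

Lemma lip_at_cst c : lip_at (fun=> c) c.
Proof. by exists 0; apply: filterE => x _; rewrite subrr normr0 mul0r. Qed.

Lemma lip_at_eq f g l : (\forall x \near a, D x -> f x = g x) -> lip_at g l -> lip_at f l.
Proof.
by move=> fg [C gC]; exists C; move: fg gC; apply: filterS2 => x fg gC Dx; rewrite fg ?gC.
Qed.

Lemma lip_atD f g l m : lip_at f l -> lip_at g m -> lip_at (fun x => f x + g x) (l + m).
Proof.
move=> [Cf fC] [Cg gC]; exists (Cf + Cg); move: fC gC; apply: filterS2 => x fx gx Dx.
rewrite opprD addrACA mulrDl.
exact: le_trans (ler_normD _ _) (lerD (fx Dx) (gx Dx)).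
Qed.

Lemma lip_atM f g l m : lip_at f l -> lip_at g m -> lip_at (fun x => f x * g x) (l * m).
Proof.
move=> fl gm; have [B gB] := lip_at_bounded gm.
case: fl gm => [Cf fC] [Cg gC]; exists (Cf * B + `|l| * Cg).
move: fC gC gB; apply: filterS3 => x fx gx Bx Dx.
have -> : f x * g x - l * m = (f x - l) * g x + l * (g x - m) by ring.
apply: le_trans (ler_normD _ _) _; rewrite !normrM mulrDl.
apply: lerD; last by rewrite -mulrA ler_wpM2l ?gx.
by rewrite mulrAC ler_pM ?fx ?Bx.
Qed.

Lemma lip_at0M f g B : lip_at f 0 -> (\forall x \near a, `|g x| <= B) ->
  lip_at (fun x => f x * g x) 0.
Proof.
case=> C fC gB; exists (C * B); move: fC gB; apply: filterS2 => x fx gx Dx.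
rewrite subr0 normrM mulrAC; have := fx Dx; rewrite subr0 => fx'.
exact: ler_pM fx' gx.
Qed.

Lemma lip_at_uniform (I : finType) (F : I -> V -> R) (L : I -> R) :
  (forall i, lip_at (F i) (L i)) ->
  exists2 C, 0 <= C & \forall x \near a, D x -> forall i, `|F i x - L i| <= C * enormr (x - a).
Proof.
move=> FL; have [C FC] := choice FL.
have FCa : \forall x \near a, forall i, D x -> `|F i x - L i| <= C i * enormr (x - a).
  exact: filter_forall _ FC.
exists (\sum_i `|C i|); first exact: sumr_ge0.
apply: filterS FCa => x FCx Dx i; apply: le_trans (FCx i Dx) _.
rewrite ler_wpM2r ?enormr_ge0 // (le_trans (ler_norm _)) //.
by rewrite (bigD1 i) //= lerDl sumr_ge0.
Qed.

Lemma lip_at_sum (I : finType) (P : pred I) (F : I -> V -> R) (L : I -> R) :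
  (forall i, P i -> lip_at (F i) (L i)) ->
  lip_at (fun x => \sum_(i | P i) F i x) (\sum_(i | P i) L i).
Proof.
move=> FL.
have FL' i : lip_at (fun x => if P i then F i x else L i) (L i).
  by case Pi: (P i); [exact: FL | exact: lip_at_cst].
have [C _ FC] := lip_at_uniform FL'.
exists (\sum_(i | P i) C); apply: filterS FC => x FCx Dx.
rewrite -sumrB mulr_suml; apply: le_trans (ler_norm_sum _ _ _) (ler_sum _ _) => i Pi.
by have := FCx Dx i; rewrite Pi.
Qed.

Lemma lip_at_pvec (y : V) k : lip_at (fun x => pvec (y - x) k 0) (pvec (y - a) k 0).
Proof.
exists 1; apply: filterE => x _; rewrite mul1r /pvec.
case: (split_ordP k) => j ->; first by rewrite !col_mxEu subrr normr0 enormr_ge0.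
rewrite !col_mxEd !mxE (_ : _ - _ = - (x - a) 0 j); last by rewrite !mxE; ring.
by rewrite normrN normr_coord_le_enormr.
Qed.

Lemma lip_at_smooth f : smooth f -> lip_at f (f a).
Proof.
case/(_ 1%N) => df cdf; pose Df j x := derive f x (delta_mx 0 j : V).
have /nbhs_enormrP [e e_gt0 Dfe] : \forall x \near a, forall j, `|Df j a - Df j x| < 1.
  have Dfj j : \forall x \near a, `|Df j a - Df j x| < 1.
    by move: (cdf (delta_mx 0 j) a) => /cvgr_dist_lt /(_ _ ltr01).
  exact: filter_forall _ Dfj.
exists (\sum_j (`|Df j a| + 1)); apply/nbhs_enormrP; exists e => // x xa _.
(* Walk from a to x one coordinate at a time, with the mean value theorem on each step. *)
pose z k : V := \row_j (if (j < k)%N then x 0 j else a 0 j).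
have zS (k : 'I_d) : z k.+1 = z k + (x 0 k - a 0 k) *: delta_mx 0 k.
  apply/rowP => j; rewrite !mxE ltnS leq_eqVlt eqxx /=.
  case: (eqVneq j k) => [->|jk] /=; first by rewrite eqxx ltnn /= mulr1 addrC subrK.
  have jk' : (nat_of_ord j == k) = false by exact: negbTE.
  by rewrite jk' /= mulr0 addr0.
have z_near (k : 'I_d) s : `|s| <= `|x 0 k - a 0 k| ->
    enormr (z k + s *: delta_mx 0 k - a) < e.
  move=> sk; apply: le_lt_trans xa; apply: enormr_le => j; rewrite !mxE.
  case: (eqVneq j k) => [->|jk]; first by rewrite ltnn !eqxx mulr1 addrAC subrr add0r.
  by rewrite andbF mulr0 addr0; case: ifP; rewrite ?subrr ?normr0.
have z0 : z 0%N = a by apply/rowP => j; rewrite mxE.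
have zd : z d = x by apply/rowP => j; rewrite mxE ltn_ord.
rewrite -{1}zd -{1}z0 -(telescope_sumr (fun k => f (z k)) (leq0n d)) big_mkord.
rewrite mulr_suml; apply: le_trans (ler_norm_sum _ _ _) (ler_sum _ _) => k _.
rewrite zS; apply: le_trans (increment_along_le (B := `|Df k a| + 1) _ _) _.
- by move=> s; exact: df.
- move=> s sk; have := Dfe _ (z_near k s sk) k.
  have := ler_distD (Df k a) 0 (Df k (z k + s *: delta_mx 0 k)).
  by rewrite !sub0r !normrN; lra.
- have := normr_coord_le_enormr (x - a) k; rewrite !mxE => xak.
  by rewrite ler_wpM2l ?addr_ge0.
Qed.

End LipschitzAt.

Lemma sum_ord_le (R : numDomainType) n (f : 'I_n -> R) C :
  (forall i, f i <= C) -> \sum_i f i <= n%:R * C.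
Proof.
move=> fC; apply: le_trans (ler_sum _ (fun i _ => fC i)) _.
by rewrite sumr_const card_ord mulr_natl.
Qed.

Lemma ler_dist_via (R : realDomainType) (p q l Cp Cq ep eq : R) :
  0 <= Cp -> 0 <= Cq -> 0 <= ep -> 0 <= eq ->
  `|p - l| <= Cp * ep -> `|q - l| <= Cq * eq -> `|p - q| <= (Cp + Cq) * (ep + eq).
Proof.
move=> Cp0 Cq0 ep0 eq0 pl ql; apply: le_trans (ler_distD l p q) _.
rewrite [`|l - q|]distrC mulrDr !mulrDl.
have : 0 <= Cp * eq by rewrite mulr_ge0.
have : 0 <= Cq * ep by rewrite mulr_ge0.
lra.
Qed.

Section Perturbation.
Variables (R : realType) (n : nat) (A B : 'M[R]_n) (y y' : 'cV[R]_n) (c al be ga : R).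
Hypotheses (c_gt0 : 0 < c) (cA : c <= sigma_min A) (cB : c <= sigma_min B).
Hypotheses (AB_le : forall k l, `|A k l - B k l| <= al)
  (yy'_le : forall k, `|y k 0 - y' k 0| <= be) (y'_le : forall k, `|y' k 0| <= ga).

Lemma invmx_mul_sub_le :
  enormc (invmx A *m y - invmx B *m y') <= n%:R * (be + n%:R * (al * (n%:R * ga / c))) / c.
Proof.
pose z := invmx B *m y'.
have Bz : B *m z = y' by rewrite /z mulmxA mulmxV ?mul1mx ?(sigma_min_unitmx c_gt0 cB).
have AAz : invmx A *m (A *m z) = z.
  by rewrite mulmxA mulVmx ?mul1mx ?(sigma_min_unitmx c_gt0 cA).
have z_le l : `|z l 0| <= n%:R * ga / c.
  apply: le_trans (normr_coord_le_enormc z l) _.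
  apply: le_trans (enormc_invmx_mul c_gt0 cB y') _; rewrite ler_pM2r ?invr_gt0 //.
  exact: le_trans (enormc_le_sum _) (sum_ord_le _).
have -> : invmx A *m y - invmx B *m y' = invmx A *m (y - y' + (B - A) *m z).
  by rewrite mulmxBl Bz addrA subrK mulmxBr AAz.
clearbody z; apply: le_trans (enormc_invmx_mul c_gt0 cA _) _; rewrite ler_pM2r ?invr_gt0 //.
apply: le_trans (enormc_le_sum _) (sum_ord_le _) => k.
rewrite !mxE; apply: le_trans (ler_normD _ _) (lerD (yy'_le k) _).
apply: le_trans (ler_norm_sum _ _ _) (sum_ord_le _) => l.
rewrite !mxE normrM distrC.
exact: ler_pM (normr_ge0 _) (normr_ge0 _) (AB_le k l) (z_le l).
Qed.

End Perturbation.

Section WeightedSums.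
Variables (R : realType) (d N : nat) (a : 'rV[R]_d) (D : set 'rV[R]_d).
Variables (S Sc : {set 'I_N}) (w : 'I_N -> 'rV[R]_d -> R) (wl : 'I_N -> R).
Hypotheses (ScS : Sc \subset S)
  (w_common : forall i, i \in Sc -> lip_at a D (w i) (wl i))
  (w_switched : forall i, i \in S :\: Sc -> lip_at a D (w i) 0).

Lemma lip_at_weighted_sum (phi : 'I_N -> 'rV[R]_d -> R) :
  (forall i, lip_at a D (phi i) (phi i a)) ->
  lip_at a D (fun x => \sum_(i in S) w i x * phi i x) (\sum_(i in Sc) wl i * phi i a).
Proof.
move=> phi_lip.
have -> : (fun x => \sum_(i in S) w i x * phi i x) =
    (fun x => \sum_(i in Sc) w i x * phi i x + \sum_(i in S :\: Sc) w i x * phi i x).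
  by apply/funext => x; have /finset.setIidPr SSc := ScS; rewrite (big_setID Sc) /= SSc.
have -> : \sum_(i in Sc) wl i * phi i a =
    \sum_(i in Sc) wl i * phi i a + \sum_(i in S :\: Sc) 0 * phi i a.
  by rewrite [X in _ = _ + X]big1 ?addr0 // => i _; rewrite mul0r.
apply: lip_atD; apply: lip_at_sum => i iS.
  exact: lip_atM (w_common iS) (phi_lip i).
exact: lip_atM (w_switched iS) (phi_lip i).
Qed.

End WeightedSums.

Lemma mod_weight_lip_at0 (R : realType) (d N : nat) (xs : 'I_N -> 'rV[R]_d)
    (dw : 'rV[R]_d -> R) (eta : 'I_N -> 'rV[R]_d -> R) (a : 'rV[R]_d) (D : set 'rV[R]_d) i :
  continuous dw -> lip_at a D (eta i) 0 -> lip_at a D (mod_weight xs dw eta i) 0.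
Proof.
move=> dw_cont eta0.
have dw_cont_at : {for a, continuous (fun x : 'rV[R]_d => dw (xs i - x))}.
  by apply: continuous_comp; [exact: (cvgB (cvg_cst _) cvg_id) | exact: dw_cont].
have [B dwB] := bounded_near_continuous dw_cont_at.
exact: lip_at0M eta0 dwB.
Qed.

Section MLSLimits.
Variables (R : realType) (d N : nat) (xs : 'I_N -> 'rV[R]_d) (dw : 'rV[R]_d -> R).
Variables (eta : 'I_N -> 'rV[R]_d -> R) (a : 'rV[R]_d) (D : set 'rV[R]_d).
Variables (S Sc : {set 'I_N}) (wl : 'I_N -> R).
Hypotheses (ScS : Sc \subset S)
  (w_common : forall i, i \in Sc -> lip_at a D (mod_weight xs dw eta i) (wl i))
  (w_switched : forall i, i \in S :\: Sc -> lip_at a D (mod_weight xs dw eta i) 0).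

Lemma MLS_M_lip_at k l : lip_at a D (fun x => MLS_M xs dw eta S x k l)
  (\sum_(i in Sc) wl i * (pvec (xs i - a) k 0 * pvec (xs i - a) l 0)).
Proof.
have -> : (fun x => MLS_M xs dw eta S x k l) = (fun x => \sum_(i in S)
    mod_weight xs dw eta i x * (pvec (xs i - x) k 0 * pvec (xs i - x) l 0)).
  apply/funext => x; rewrite /MLS_M summxE; apply: eq_bigr => i _.
  by rewrite mxE mxE big_ord1 (mxE trmx_key).
apply: lip_at_weighted_sum => // i.
exact: lip_atM (lip_at_pvec _ _ _ _) (lip_at_pvec _ _ _ _).
Qed.

Lemma MLS_b_lip_at u k : lip_at a D (fun x => MLS_b xs dw eta u S x k 0)
  (\sum_(i in Sc) wl i * (u i * pvec (xs i - a) k 0)).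
Proof.
have -> : (fun x => MLS_b xs dw eta u S x k 0) = (fun x => \sum_(i in S)
    mod_weight xs dw eta i x * (u i * pvec (xs i - x) k 0)).
  by apply/funext => x; rewrite /MLS_b summxE; apply: eq_bigr => i _; rewrite mxE mulrA.
apply: lip_at_weighted_sum => // i.
exact: lip_atM (lip_at_cst _ _ _) (lip_at_pvec _ _ _ _).
Qed.

End MLSLimits.

Section Jump.
Variables (R : realType) (d n : nat) (a : 'rV[R]_d) (Do Dn : set 'rV[R]_d).
Variables (Mo Mn : 'rV[R]_d -> 'M[R]_n) (bo bn : 'rV[R]_d -> 'cV[R]_n).
Variables (M0 : 'I_n -> 'I_n -> R) (b0 : 'I_n -> R) (c : R).
Hypotheses (c_gt0 : 0 < c) (sigma_near : \forall x \near a,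
  (Do x -> c <= sigma_min (Mo x)) /\ (Dn x -> c <= sigma_min (Mn x))).
Hypotheses (Mo_lip : forall k l, lip_at a Do (fun x => Mo x k l) (M0 k l))
  (Mn_lip : forall k l, lip_at a Dn (fun x => Mn x k l) (M0 k l))
  (bo_lip : forall k, lip_at a Do (fun x => bo x k 0) (b0 k))
  (bn_lip : forall k, lip_at a Dn (fun x => bn x k 0) (b0 k)).

Lemma solution_jump_le : exists2 C, 0 < C & exists2 del, 0 < del &
  forall xo xn, Do xo -> Dn xn -> enormr (xo - a) < del -> enormr (xn - a) < del ->
    enormc (invmx (Mn xn) *m bn xn - invmx (Mo xo) *m bo xo)
      <= C * (enormr (xo - a) + enormr (xn - a)).
Proof.
have [CMo CMo0 Mo_near] := lip_at_uniform (fun kl : 'I_n * 'I_n => Mo_lip kl.1 kl.2).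
have [CMn CMn0 Mn_near] := lip_at_uniform (fun kl : 'I_n * 'I_n => Mn_lip kl.1 kl.2).
have [Cbo Cbo0 bo_near] := lip_at_uniform bo_lip.
have [Cbn Cbn0 bn_near] := lip_at_uniform bn_lip.
have [del del_gt0 near_a] := iffLR (nbhs_enormrP _ _) (filterI sigma_near (filterI Mo_near
  (filterI Mn_near (filterI bo_near (filterI bn_near (near_enormr_lt a ltr01)))))).
(* Cb bounds the entries of bo near a, where enormr (x - a) < 1. *)
pose Cb := \sum_k `|b0 k| + Cbo.
pose C := n%:R * (Cbn + Cbo + n%:R * ((CMn + CMo) * (n%:R * Cb / c))) / c.
have C0 : 0 <= C.
  rewrite /C; do ![apply: mulr_ge0 | apply: addr_ge0 | apply: sumr_ge0 => k _
                  | rewrite invr_ge0 ltW] => //.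
exists (C + 1); first exact: ltr_wpDl C0 ltr01.
exists del => // xo xn Doxo Dnxn xo_near xn_near.
have [[sigma_o _] [Mox [_ [box [_ xo1]]]]] := near_a xo xo_near.
have [[_ sigma_n] [_ [Mnx [_ [bnx _]]]]] := near_a xn xn_near.
set eo := enormr (xo - a); set en := enormr (xn - a).
have [eo0 en0] : 0 <= eo /\ 0 <= en by split; apply: enormr_ge0.
apply: le_trans (invmx_mul_sub_le (al := (CMn + CMo) * (en + eo))
  (be := (Cbn + Cbo) * (en + eo)) (ga := Cb) c_gt0 (sigma_n Dnxn) (sigma_o Doxo) _ _ _) _.
- by move=> k l; apply: ler_dist_via (Mnx Dnxn (k, l)) (Mox Doxo (k, l)).
- by move=> k; apply: ler_dist_via (bnx Dnxn k) (box Doxo k).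
- move=> k; have := ler_distD (b0 k) 0 (bo xo k 0); rewrite !sub0r !normrN distrC => bok.
  apply: le_trans bok (lerD _ _); first by rewrite (bigD1 k) //= lerDl sumr_ge0.
  by apply: le_trans (box Doxo k) _; apply: ler_piMr => //; exact: ltW.
have -> : n%:R * ((Cbn + Cbo) * (en + eo)
    + n%:R * ((CMn + CMo) * (en + eo) * (n%:R * Cb / c))) / c = C * (eo + en).
  by rewrite /C; ring.
by rewrite ler_wpM2r ?addr_ge0 // lerDl.
Qed.

End Jump.

Theorem mainTheorem1 (R : realType) (d N : nat) (xs : 'I_N -> 'rV[R]_d)
  (cells : {set {set 'I_N}}) (So Sn : {set 'I_N}) (xstar : 'rV[R]_d)
  (dw : 'rV[R]_d -> R) (eta : 'I_N -> 'rV[R]_d -> R) (u : 'I_N -> R) :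
  conforming_mesh xs cells ->
  common_facet d cells So Sn ->
  closed_cell xs (So :&: Sn) xstar ->
  weight_function dw ->
  let No := ring1 cells So in
  let Nn := ring1 cells Sn in
  let Nc := No :&: Nn in
  let Nr := No :\: Nc in
  let Na := Nn :\: Nc in
  (* (i) smoothness of eta_i d near x* in T_o u T_n for common nodes *)
  (exists2 delta : R, 0 < delta &
     exists g : 'I_N -> 'rV[R]_d -> R, forall i, i \in Nc ->
       smooth (g i) /\
       forall x, (open_cell xs So x \/ open_cell xs Sn x) ->
         enormr (x - xstar) < delta -> g i x = eta i x * dw (xs i - x)) ->
  (* (ii) eta is locally diminishing *)
  (exists2 K : R, 0 < K & exists2 delta : R, 0 < delta &
     (forall i x, i \in Nr -> open_cell xs So x -> enormr (x - xstar) < delta ->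
        `|eta i x| <= K * enormr (x - xstar)) /\
     (forall i x, i \in Na -> open_cell xs Sn x -> enormr (x - xstar) < delta ->
        `|eta i x| <= K * enormr (x - xstar))) ->
  (* (iii) non-degenerate nodes near x* *)
  (exists2 c : R, 0 < c & exists2 delta : R, 0 < delta &
     forall x, enormr (x - xstar) < delta ->
       (open_cell xs So x -> c <= sigma_min (MLS_M xs dw eta No x)) /\
       (open_cell xs Sn x -> c <= sigma_min (MLS_M xs dw eta Nn x))) ->
  (* conclusion: the jump of [u_hat; grad u_hat] across F is O(eps) *)
  exists2 C : R, 0 < C & exists2 delta : R, 0 < delta &
    forall xo xn, open_cell xs So xo -> open_cell xs Sn xn ->
      enormr (xo - xstar) < delta -> enormr (xn - xstar) < delta ->
      enormc (MLS_recon xs dw eta u Nn xn - MLS_recon xs dw eta u No xo)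
        <= C * (enormr (xo - xstar) + enormr (xn - xstar)).
Proof.
move=> _ _ _ [dw_smooth _ _] No Nn Nc Nr Na [del1 del1_gt0 [g g_eq]]
  [K K_gt0 [del2 del2_gt0 [eta_r eta_a]]] [c c_gt0 [del3 del3_gt0 sigma_near]].
have w_common S : (forall x, open_cell xs S x -> open_cell xs So x \/ open_cell xs Sn x) ->
    forall i, i \in Nc -> lip_at xstar (open_cell xs S) (mod_weight xs dw eta i) (g i xstar).
  move=> S_cells i /g_eq [g_smooth g_eta]; apply: lip_at_eq (lip_at_smooth _ _ g_smooth).
  by apply/nbhs_enormrP; exists del1 => // x x_near /S_cells Sx; rewrite g_eta.
have w_switched S (Ns : {set 'I_N}) : (forall i x, i \in Ns -> open_cell xs S x ->
      enormr (x - xstar) < del2 -> `|eta i x| <= K * enormr (x - xstar)) ->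
    forall i, i \in Ns -> lip_at xstar (open_cell xs S) (mod_weight xs dw eta i) 0.
  move=> eta_small i iNs; apply: mod_weight_lip_at0; first exact: dw_smooth 0%N.
  exists K; apply/nbhs_enormrP; exists del2 => // x x_near Sx.
  by rewrite subr0; exact: eta_small.
have wo_common := w_common So (fun _ Sx => or_introl Sx).
have wn_common := w_common Sn (fun _ Sx => or_intror Sx).
have wo_removed := w_switched So Nr eta_r.
have wn_added := w_switched Sn Na eta_a.
have [C C_gt0 [del del_gt0 jump]] := solution_jump_le
  (Do := open_cell xs So) (Dn := open_cell xs Sn) c_gt0
  (iffRL (nbhs_enormrP _ _) (ex_intro2 _ _ del3 del3_gt0 sigma_near))
  (MLS_M_lip_at (subsetIl No Nn) wo_common wo_removed)
  (MLS_M_lip_at (subsetIr No Nn) wn_common wn_added)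
  (MLS_b_lip_at (subsetIl No Nn) wo_common wo_removed u)
  (MLS_b_lip_at (subsetIr No Nn) wn_common wn_added u).
by exists C => //; exists del.
Qed.
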